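(* Let $n\ge 4$ be an integer not divisible by $3$. Then the prism $D_n=C_n\Box P_2$ (on $2n$ vertices) is $\mathbb{Z}_{2n}$-distance antimagic.
   Context: $C_n$ is the cycle of length $n$, $P_2$ the path with two vertices ($K_2$), and $\Box$ the Cartesian product: $V(G\Box H)=V(G)\times V(H)$, with $(x,u)\sim(y,v)$ iff ($x=y$ and $uv\in E(H)$) or ($u=v$ and $xy\in E(G)$). $\mathbb{Z}_m$ is the cyclic group of integers modulo $m$. For a graph $G$ with $N$ vertices and an Abelian group $A$ of order $N$, and a bijection $f:V(G)\to A$, the weight of $x$ is $w_f(x)=\sum_{y\in N(x)} f(y)$ computed in $A$ ($N(x)$ the open neighbourhood). $f$ is an $A$-distance antimagic labelling if all weights are pairwise distinct; $G$ is $A$-distance antimagic if it admits such a labelling. *)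

From HB Require Import structures.
From mathcomp Require Import all_boot all_order all_algebra.
Set Implicit Arguments. Unset Strict Implicit. Unset Printing Implicit Defensive.
Import GRing.Theory.
Local Open Scope ring_scope.

Definition cycle_adj (n : nat) : rel 'I_n :=
  fun i j => (((i.+1 %% n)%N == j) || ((j.+1 %% n)%N == i)).

Definition P2_adj : rel 'I_2 := fun u v => u != v.

Definition cart_adj (T U : finType) (g : rel T) (h : rel U) : rel (T * U) :=
  fun p q => ((p.1 == q.1) && h p.2 q.2) || ((p.2 == q.2) && g p.1 q.1).

Definition prism_adj (n : nat) : rel ('I_n * 'I_2) :=
  cart_adj (@cycle_adj n) P2_adj.

Definition weight (T : finType) (adj : rel T) (A : zmodType) (f : T -> A) (x : T) : A :=
  \sum_(y : T | adj x y) f y.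

Definition distance_antimagic_labelling (T : finType) (adj : rel T)
  (A : zmodType) (f : T -> A) : Prop :=
  bijective f /\ injective (weight adj f).

Definition distance_antimagic (T : finType) (adj : rel T) (A : zmodType) : Prop :=
  exists f : T -> A, distance_antimagic_labelling adj f.

From mathcomp Require Import all_boot all_order all_algebra.
From mathcomp Require Import zify.
Import GRing.Theory.
Set Implicit Arguments. Unset Strict Implicit. Unset Printing Implicit Defensive.

(* We label (i, u) by 2i + u in Z_(2n), which is clearly a bijection.
   For n >= 3 the neighbourhood of (i, u) consists of exactly three distinct
   vertices (i+1, u), (i-1, u) and (i, 1-u), so its weight is
     2(i+1) + u + 2(i-1) + u + 2i + 1 - u = 6i + 1 + u   in Z_(2n);
   reducing the cycle coordinate mod n is harmless since it only changes
   2i by a multiple of 2n.  If 6i + 1 + u = 6j + 1 + v mod 2n, reducing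
   mod 2 gives u = v, and then 3i = 3j mod n, so i = j as 3 is coprime to n. *)

Lemma eqn_modMl_coprime (k m a b : nat) :
  coprime k m -> k * a = k * b %[mod m] -> a = b %[mod m].
Proof.
move=> cop_km.
wlog le_ba : a b / b <= a => [hwlog|].
  by case: (leqP b a) => [|/ltnW] /hwlog hab // /esym /hab.
move/eqP; rewrite eqn_mod_dvd ?leq_mul2l ?le_ba ?orbT // -mulnBr.
rewrite Gauss_dvdr 1?coprime_sym // => dvd_m; apply/eqP; rewrite eqn_mod_dvd //.
Qed.

Lemma sixfold_offset_inj (m i j u v : nat) : coprime 3 m ->
  i < m -> j < m -> u < 2 -> v < 2 ->
  6 * i + u = 6 * j + v %[mod 2 * m] -> i = j /\ u = v.
Proof.
move=> cop_3m lt_im lt_jm lt_u2 lt_v2 congr_ij.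
have parity : (6 * i + u) %% 2 = (6 * j + v) %% 2.
  have two_dvd : 2 %| 2 * m by rewrite dvdn_mulr.
  by rewrite -(modn_dvdm (6 * i + u) two_dvd) congr_ij modn_dvdm.
have eq_uv : u = v by lia.
subst v; split => //.
have congr3 : 3 * i = 3 * j %[mod m].
  apply/eqP; rewrite -(eqn_pmul2l (isT : 0 < 2)) !muln_modr !mulnA.
  by rewrite -(eqn_modDr u) congr_ij.
by move: (eqn_modMl_coprime cop_3m congr3); rewrite !modn_small.
Qed.

Section Prism.

Variable n : nat.

Lemma cycle_adjE (i j : 'I_n) :
  cycle_adj i j = (j == ordS i) || (j == ord_pred i).
Proof.
rewrite /cycle_adj -[(j.+1 %% n)%N == i]/(ordS j == i).
by rewrite eq_sym -(inj_eq (@ord_pred_inj n)) ordSK.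
Qed.

Lemma neq_I2 (u v : 'I_2) : (u != v) = (v == rev_ord u).
Proof. by case: u v => [[|[|]] ?] // [[|[|]] ?]. Qed.

Definition prism_nbrs (i : 'I_n) (u : 'I_2) : seq ('I_n * 'I_2) :=
  [:: (ordS i, u); (ord_pred i, u); (i, rev_ord u)].

Lemma prism_adjE (i : 'I_n) (u : 'I_2) (y : 'I_n * 'I_2) :
  prism_adj (i, u) y = (y \in prism_nbrs i u).
Proof.
case: y => j v; rewrite /prism_adj /cart_adj /= cycle_adjE /P2_adj neq_I2.
rewrite !inE !xpair_eqE [j == i]eq_sym [u == v]eq_sym.
by rewrite orbC andb_orr !(andbC (v == u)) orbA.
Qed.

Hypothesis n_gt2 : 2 < n.

(* On a cycle of length at least 3, successor and predecessor differ:
   otherwise i + 2 = i mod n. *)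
Lemma ordS_neq_pred (i : 'I_n) : ordS i != ord_pred i.
Proof.
apply/eqP => /(congr1 (@ordS n)); rewrite ord_predK => /(congr1 val) /=.
rewrite -addn1 modnDml addn1 => eq_i.
have lt_in := ltn_ord i.
case: (ltnP i.+2 n) => [lt_i2n | le_ni2].
  by move: eq_i; rewrite modn_small //; lia.
move: eq_i; rewrite -(subnK le_ni2) modnDr modn_small; lia.
Qed.

Lemma prism_nbrs_uniq (i : 'I_n) (u : 'I_2) : uniq (prism_nbrs i u).
Proof.
have u_neq : u != rev_ord u by rewrite neq_I2.
rewrite /= !inE !xpair_eqE (negbTE u_neq) !andbF /=.
by rewrite (negbTE (ordS_neq_pred i)).
Qed.

End Prism.

Lemma weight_seq (T : finType) (adj : rel T) (A : zmodType) (f : T -> A)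
    (x : T) (r : seq T) :
  uniq r -> (forall y, adj x y = (y \in r)) ->
  weight adj f x = (\sum_(y <- r) f y)%R.
Proof. by move=> uniq_r adjE; rewrite /weight (eq_bigl _ _ adjE) big_uniq. Qed.

Definition prism_label (n : nat) (x : 'I_n * 'I_2) : 'Z_(2 * n) :=
  ((2 * x.1 + x.2)%N%:R)%R.

Lemma double_modn (n k m : nat) : 0 < n ->
  ((2 * (k %% n) + m)%N%:R = (2 * k + m)%N%:R :> 'Z_(2 * n))%R.
Proof.
move=> n_gt0; have n2_gt1 : 1 < 2 * n by lia.
by rewrite muln_modr -Zp_nat_mod // modnDml Zp_nat_mod.
Qed.

(* The label 2i + u < 2n determines (i, u), and both sides have 2n elements. *)
Lemma prism_label_bij (n : nat) : 0 < n -> bijective (@prism_label n).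
Proof.
move=> n_gt0; apply: inj_card_bij; last first.
  by rewrite card_prod !card_ord Zp_cast 1?mulnC //; lia.
have val_label (x : 'I_n * 'I_2) : nat_of_ord (prism_label x) = 2 * x.1 + x.2.
  have := ltn_ord x.1; have := ltn_ord x.2 => ? ?.
  by rewrite val_Zp_nat ?modn_small //; lia.
move=> [i u] [j v] /(congr1 (@nat_of_ord _)); rewrite !val_label /=.
have := ltn_ord u; have := ltn_ord v => ? ? eq_ij.
by congr pair; apply: val_inj => /=; lia.
Qed.

(* The weight of (i, u) is 2(i+1) + u + 2(i-1) + u + 2i + (1-u) = 6i + 1 + u,
   the sum being computed up to a multiple of 2n. *)
Lemma prism_label_weight (n : nat) (i : 'I_n) (u : 'I_2) : 2 < n ->
  weight (@prism_adj n) (@prism_label n) (i, u) = ((6 * i + 1 + u)%N%:R)%R.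
Proof.
move=> n_gt2; have n_gt0 : 0 < n by lia.
rewrite (weight_seq _ (prism_nbrs_uniq n_gt2 i u) (@prism_adjE n i u)).
rewrite !big_cons big_nil addr0 /prism_label /= !double_modn //.
have n2_gt1 : 1 < 2 * n by lia.
rewrite -!natrD -(Zp_nat_mod n2_gt1) -[in RHS](Zp_nat_mod n2_gt1).
rewrite -(modnDr (6 * i + 1 + u) (2 * n)); congr (_ %:R)%R.
by congr (_ %% _); have := ltn_ord u; lia.
Qed.

Theorem mainTheorem10 (n : nat) (hn : (4 <= n)%N) (h3 : ~~ (3 %| n)%N) :
  distance_antimagic (@prism_adj n) 'Z_(2 * n).
Proof.
have n2_gt1 : 1 < 2 * n by lia.
have cop_3n : coprime 3 n by rewrite prime_coprime.
exists (@prism_label n); split; first by apply: prism_label_bij; lia.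
move=> [i u] [j v]; rewrite !prism_label_weight; try lia.
move=> /(congr1 (@nat_of_ord _)); rewrite !val_Zp_nat // !(addnAC _ 1).
move=> /eqP; rewrite eqn_modDr => /eqP.
move=> /(sixfold_offset_inj cop_3n (ltn_ord i) (ltn_ord j) (ltn_ord u) (ltn_ord v)).
by move=> [eq_ij eq_uv]; congr pair; apply: val_inj.
Qed.
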